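(* Let $V$ be an $n$-dimensional vector space over a field of characteristic zero, and let $A^{a_1\dots a_p}$ and $B_{a_1\dots a_p}$ be $p$-forms with $A$ simple. Let $P^a{}_b=A^{ac_2\dots c_p}B_{bc_2\dots c_p}$ and $T=T^a{}_b\{A,B\}=P-\frac{1}{2p}[P]$. Then $$T^2=\frac{1}{(2p)^2}[P]^2,$$ which, if $n\neq 2p$, can be written as $$T^2=\frac{1}{(n-2p)^2}[T]^2.$$
   Context: Index-free notation for $(1,1)$-tensors: products denote composition, $[X]=X^c{}_c$ is the trace, and a scalar term is understood as multiplied by the identity $\delta^a_b$. Thus $T^a{}_b\{A,B\}=A^{ac_2\dots c_p}B_{bc_2\dots c_p}-\frac{1}{2p}A^{c_1\dots c_p}B_{c_1\dots c_p}\delta^a_b$ (the ''superenergy tensor'' of $A,B$). A $p$-form $A$ is simple if $A^{a_1\dots a_p}=u^{[a_1}\cdots w^{a_p]}$ for some vectors $u,\dots,w$. No metric is assumed. *)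

From HB Require Import structures.
From mathcomp Require Import all_boot all_order all_algebra all_fingroup.
Set Implicit Arguments. Unset Strict Implicit. Unset Printing Implicit Defensive.
Import GRing.Theory.
Local Open Scope ring_scope.

Definition pform (F : Type) (n p : nat) := p.-tuple 'I_n -> F.

Definition alternating (F : fieldType) (n p : nat) (A : pform F n p) : Prop :=
  forall (s : 'S_p) (t : p.-tuple 'I_n),
    A [tuple tnth t (s i) | i < p] = (-1) ^+ s * A t.

(* Simple: A^{a1..ap} = u_1^{[a1} ... u_p^{ap]} (antisymmetrization with 1/p!). *)
Definition simple_form (F : fieldType) (n p : nat) (A : pform F n p) : Prop :=
  exists u : 'I_p -> 'I_n -> F,
    forall t : p.-tuple 'I_n,
      A t = (p`!%:R)^-1 *
            \sum_(s : 'S_p) (-1) ^+ s * \prod_(i < p) u i (tnth t (s i)).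

Definition Pmx (F : fieldType) (n q : nat) (A B : pform F n q.+1) : 'M[F]_n :=
  \matrix_(a, b) \sum_(c : q.-tuple 'I_n)
     A [tuple of a :: c] * B [tuple of b :: c].

Definition Tmx (F : fieldType) (n q : nat) (A B : pform F n q.+1) : 'M[F]_n :=
  Pmx A B - ((2 * q.+1)%:R^-1 * \tr (Pmx A B))%:M.

From HB Require Import structures.
From mathcomp Require Import all_boot all_order all_algebra all_fingroup.
From mathcomp Require Import ring.
Set Implicit Arguments. Unset Strict Implicit. Unset Printing Implicit Defensive.
Import GRing.Theory.
Local Open Scope ring_scope.

(* Write the simple form as A = u_1 /\ ... /\ u_p.  Expanding A along its first
   index gives P = sum_i u_i (x) beta_i, where beta_i is B evaluated on the u_k,
   k <> i, and on the free index in slot i.  As B is alternating,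
   beta_i(u_k) = delta_ik lam with lam = B(u_1, ..., u_p) / p; hence P^2 = lam P
   and [P] = p lam.  Then T = P - (lam/2) I squares to (lam/2)^2 = [P]^2/(2p)^2,
   and [T] = (2p - n) lam/2 gives the second form. *)

Lemma big_tuple_cons (R : Type) (idx : R) (op : Monoid.com_law idx)
    (T : finType) q (f : q.+1.-tuple T -> R) :
  \big[op/idx]_t f t = \big[op/idx]_x \big[op/idx]_(c : q.-tuple T) f [tuple of x :: c].
Proof.
rewrite pair_big /= (reindex (fun xc : T * q.-tuple T => [tuple of xc.1 :: xc.2])) //=.
exists (fun t => (thead t, [tuple of behead t])) => [[x c] _|t _] /=.
  by congr pair; apply: val_inj.
by apply: val_inj; case: t => [[|y s]].
Qed.

Definition eval_form (F : fieldType) n m (f : pform F n m) (W : 'I_m -> 'I_n -> F) : F :=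
  \sum_t (\prod_j W j (tnth t j)) * f t.

Lemma eq_eval_form (F : fieldType) n m (f : pform F n m) (V W : 'I_m -> 'I_n -> F) :
  (forall j, V j =1 W j) -> eval_form f V = eval_form f W.
Proof.
by move=> eqVW; apply: eq_bigr => t _; congr (_ * _); apply: eq_bigr => j _; rewrite eqVW.
Qed.

Section Alternating.
Variables (F : fieldType) (n m : nat) (f : pform F n m).
Hypothesis f_alt : alternating f.

Lemma sum_prod_perm (V : 'I_m -> 'I_n -> F) (s : 'S_m) :
  \sum_t (\prod_j V j (tnth t (s j))) * f t = (-1) ^+ s * eval_form f V.
Proof.
pose h (t : m.-tuple 'I_n) := [tuple tnth t ((s^-1)%g j) | j < m].
have h_inj : injective h.
  move=> t1 t2 /(congr1 (fun t => tnth t (s _))) eq_t.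
  by apply: eq_from_tnth => j; have := eq_t j; rewrite !tnth_mktuple permK.
rewrite /eval_form (reindex_inj h_inj) mulr_sumr; apply: eq_bigr => t _.
rewrite f_alt odd_permV mulrCA; congr (_ * (_ * _)).
by apply: eq_bigr => j _; rewrite tnth_mktuple permK.
Qed.

Lemma eval_form_perm (V : 'I_m -> 'I_n -> F) (s : 'S_m) :
  eval_form f (fun j => V (s j)) = (-1) ^+ s * eval_form f V.
Proof.
rewrite -odd_permV -sum_prod_perm; apply: eq_bigr => t _; congr (_ * _).
by rewrite [RHS](reindex_inj (@perm_inj _ s)); apply: eq_bigr => j _; rewrite permK.
Qed.

Lemma eval_form_eq0 (V : 'I_m -> 'I_n -> F) (i k : 'I_m) :
  2%:R != 0 :> F -> i != k -> V i = V k -> eval_form f V = 0.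
Proof.
move=> two_neq0 neq_ik eqV_ik.
have := eval_form_perm V (tperm i k).
have -> : eval_form f (fun j => V (tperm i k j)) = eval_form f V.
  by apply: eq_eval_form => j; case: tpermP => [->|->|] //; rewrite eqV_ik.
rewrite odd_tperm neq_ik mulN1r => /eqP; rewrite -addr_eq0 -mulr2n -mulr_natr.
by rewrite mulf_eq0 (negbTE two_neq0) orbF => /eqP.
Qed.

Lemma eval_form_det (V : 'I_m -> 'I_n -> F) :
  \sum_t \det (\matrix_(i, j) V i (tnth t j)) * f t = m`!%:R * eval_form f V.
Proof.
under eq_bigr do rewrite /determinant mulr_suml.
rewrite exchange_big /= mulr_natl -card_Sn -sumr_const; apply: eq_bigr => s _.
under eq_bigr do rewrite -mulrA.
rewrite -mulr_sumr.
under eq_bigr do under eq_bigr do rewrite mxE.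
by rewrite sum_prod_perm mulrA -signr_addb addbb mul1r.
Qed.

End Alternating.

Lemma alternating_cons (F : fieldType) n q (f : pform F n q.+1) (x : 'I_n) :
  alternating f -> alternating (fun c : q.-tuple 'I_n => f [tuple of x :: c]).
Proof.
move=> f_alt s c; have := f_alt (lift_perm ord0 ord0 s) [tuple of x :: c].
rewrite odd_lift_perm /= => <-; congr f; apply: eq_from_tnth => j.
case: (unliftP ord0 j) => [l ->|->]; rewrite tnth_mktuple.
  by rewrite lift_perm_lift !tnthS tnth_mktuple.
by rewrite lift_perm_id.
Qed.

Lemma eval_form_cons (F : fieldType) n q (f : pform F n q.+1) (W : 'I_q.+1 -> 'I_n -> F) :
  eval_form f W =
  \sum_x W ord0 x *
    eval_form (fun c : q.-tuple 'I_n => f [tuple of x :: c]) (fun l => W (lift ord0 l)).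
Proof.
rewrite /eval_form big_tuple_cons; apply: eq_bigr => x _; rewrite mulr_sumr.
apply: eq_bigr => c _; rewrite big_ord_recl tnth0 -mulrA; congr (_ * (_ * _)).
by apply: eq_bigr => j _; rewrite (tnthS x c j).
Qed.

Section SimpleForm.
Variables (F : fieldType) (n q : nat) (u : 'I_q.+1 -> 'I_n -> F) (A B : pform F n q.+1).
Hypothesis A_wedge : forall t : q.+1.-tuple 'I_n, A t =
  (q.+1`!%:R)^-1 * \sum_(s : 'S_q.+1) (-1) ^+ s * \prod_(i < q.+1) u i (tnth t (s i)).
Hypothesis B_alt : alternating B.
Hypothesis two_neq0 : 2%:R != 0 :> F.

(* Up to the factor 1/p, [beta i b] is B evaluated on u with its i-th vector
   replaced by the basis vector e_b, so that P = sum_i u_i (x) beta_i. *)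
Let beta (i : 'I_q.+1) (b : 'I_n) : F :=
  (q.+1`!%:R)^-1 * (-1) ^+ i * q`!%:R *
  eval_form (fun c : q.-tuple 'I_n => B [tuple of b :: c]) (fun l => u (lift i l)).

Let lam : F := (q.+1`!%:R)^-1 * q`!%:R * eval_form B u.

Lemma wedge_cons (a : 'I_n) (c : q.-tuple 'I_n) :
  A [tuple of a :: c] = (q.+1`!%:R)^-1 *
    \sum_i u i a * ((-1) ^+ i * \det (\matrix_(l, j) u (lift i l) (tnth c j))).
Proof.
rewrite A_wedge; congr (_ * _).
transitivity (\det (\matrix_(i, j) u i (tnth [tuple of a :: c] j))).
  by apply: eq_bigr => s _; congr (_ * _); apply: eq_bigr => i _; rewrite mxE.
rewrite (expand_det_col _ ord0); apply: eq_bigr => i _.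
rewrite mxE tnth0 /cofactor addn0; congr (_ * (_ * \det _)).
by apply/matrixP => l j; rewrite !mxE tnthS.
Qed.

Lemma Pmx_wedge (a b : 'I_n) : Pmx A B a b = \sum_i u i a * beta i b.
Proof.
under [RHS]eq_bigr do
  rewrite /beta -mulrA -(eval_form_det (alternating_cons _ B_alt)) !mulr_sumr.
rewrite mxE exchange_big; apply: eq_bigr => c _.
by rewrite wedge_cons mulr_sumr mulr_suml; apply: eq_bigr => i _; ring.
Qed.

Lemma beta_dual (i k : 'I_q.+1) : \sum_x beta i x * u k x = (i == k)%:R * lam.
Proof.
pose v j := if j == i then u k else u j.
have v_perm : eval_form B (fun j => v (lift_perm ord0 i 1 j)) =
    \sum_x u k x *
      eval_form (fun c : q.-tuple 'I_n => B [tuple of x :: c]) (fun l => u (lift i l)).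
  rewrite eval_form_cons; apply: eq_bigr => x _; rewrite lift_perm_id /v eqxx.
  congr (_ * _); apply: eq_eval_form => l y.
  by rewrite lift_perm_lift perm1 eq_sym (negbTE (neq_lift i l)).
rewrite (_ : \sum_x beta i x * u k x = (q.+1`!%:R)^-1 * q`!%:R *
   ((-1) ^+ i * eval_form B (fun j => v (lift_perm ord0 i 1 j)))); last first.
  by rewrite v_perm !mulr_sumr; apply: eq_bigr => x _; rewrite /beta; ring.
rewrite eval_form_perm // odd_lift_perm odd_perm1 addbF /= signr_odd.
rewrite mulrA -exprD -signr_odd oddD addbb mul1r /lam.
case: eqP => [eq_ik|/eqP neq_ik].
  rewrite mul1r; congr (_ * _); apply: eq_eval_form => j x.
  by rewrite /v; case: eqP => [->|]; rewrite ?eq_ik.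
rewrite mul0r (eval_form_eq0 B_alt two_neq0 neq_ik) ?mulr0 //.
by rewrite /v eqxx eq_sym (negbTE neq_ik).
Qed.

Lemma Pmx_wedge_sqr : Pmx A B *m Pmx A B = lam *: Pmx A B.
Proof.
apply/matrixP => a b; rewrite mxE [RHS]mxE Pmx_wedge mulr_sumr.
under eq_bigr do rewrite !Pmx_wedge mulr_suml.
rewrite exchange_big; apply: eq_bigr => i _.
transitivity (\sum_k u i a * (\sum_x beta i x * u k x) * beta k b).
  under eq_bigr do rewrite mulr_sumr.
  rewrite exchange_big; apply: eq_bigr => k _.
  by rewrite mulr_sumr mulr_suml; apply: eq_bigr => x _; ring.
under eq_bigr do rewrite beta_dual.
rewrite (bigD1 i) //= eqxx mul1r big1 ?addr0 => [|k neq_ki]; first by ring.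
by rewrite eq_sym (negbTE neq_ki) mul0r mulr0 mul0r.
Qed.

Lemma mxtrace_Pmx_wedge : \tr (Pmx A B) = q.+1%:R * lam.
Proof.
rewrite /mxtrace; under eq_bigr do rewrite Pmx_wedge.
rewrite exchange_big /=.
under eq_bigr => i _ do under eq_bigr do rewrite mulrC.
under eq_bigr do rewrite beta_dual eqxx mul1r.
by rewrite sumr_const card_ord mulr_natl.
Qed.

End SimpleForm.

Lemma Pmx_simple_sqr (F : fieldType) (n q : nat) (A B : pform F n q.+1) :
    [pchar F] =i pred0 -> simple_form A -> alternating B ->
  Pmx A B *m Pmx A B = ((q.+1)%:R^-1 * \tr (Pmx A B)) *: Pmx A B.
Proof.
move=> /(pcharf0P F) natrF_eq0 [u A_wedge] B_alt.
have two_neq0 : 2%:R != 0 :> F by rewrite natrF_eq0.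
rewrite (mxtrace_Pmx_wedge A_wedge B_alt two_neq0) mulrA mulVf ?natrF_eq0 // mul1r.
exact: Pmx_wedge_sqr.
Qed.

Lemma mulmx_sub_scalar_sqr (R : comPzRingType) n (P : 'M[R]_n) (c : R) :
  P *m P = (c *+ 2) *: P -> (P - c%:M) *m (P - c%:M) = (c ^+ 2)%:M.
Proof.
move=> P_sqr; rewrite mulmxBl !mulmxBr P_sqr mul_mx_scalar mul_scalar_mx -scalar_mxM.
by rewrite opprB addrA addrAC -!scalerBl mulr2n !addrK subrr scale0r add0r.
Qed.

Lemma pchar0_natr_inj (F : fieldType) :
  [pchar F] =i pred0 -> injective (fun m : nat => m%:R : F).
Proof.
move=> /(pcharf0P F) natrF_eq0 m n /=.
wlog le_mn : m n / (m <= n)%N => [wlog_le eq_mn|eq_mn].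
  by case: (leqP m n) => [/wlog_le->//|/ltnW/wlog_le->].
by apply/eqP; rewrite eqn_leq le_mn /= -subn_eq0 -natrF_eq0 natrB // eq_mn subrr.
Qed.

Theorem theorem3 (F : fieldType) (hF : [pchar F] =i pred0) (n q : nat)
    (A B : pform F n q.+1)
    (hA : alternating A) (hB : alternating B) (hAs : simple_form A) :
  let P := Pmx A B in
  let T := Tmx A B in
  T *m T = (((2 * q.+1)%:R ^+ 2)^-1 * \tr P ^+ 2)%:M /\
  (n != (2 * q.+1)%N ->
   T *m T = (((n%:R - (2 * q.+1)%:R) ^+ 2)^-1 * \tr T ^+ 2)%:M).
Proof.
move=> P T.
have natrF_eq0 := (pcharf0P F).1 hF.
set p : F := (2 * q.+1)%:R; set c := p^-1 * \tr P.
have p_neq0 : p != 0 by rewrite natrF_eq0.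
have T_sqr : T *m T = (c ^+ 2)%:M.
  apply: mulmx_sub_scalar_sqr; rewrite Pmx_simple_sqr //; congr (_ *: _).
  by rewrite /c /p natrM -mulr_natr; field; rewrite addrC natr1 !natrF_eq0.
split; first by rewrite T_sqr exprMn exprVn.
move=> n_neq_p.
have n_sub_p_neq0 : n%:R - p != 0.
  by rewrite subr_eq0; apply: contra n_neq_p => /eqP/(pchar0_natr_inj hF)->.
have trT : \tr T = (p - n%:R) * c.
  by rewrite raddfB /= mxtrace_scalar -/P -/p -/c mulrBl mulr_natl /c mulVKf.
by rewrite T_sqr trT /c; congr _%:M; clearbody p; field; rewrite p_neq0 n_sub_p_neq0.
Qed.
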